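(* For every integer $k\ge1$ and real $u\ge k$, $$P_k(u)=\sum_{n_1>n_2>\cdots>n_k>0}\ \prod_{i=1}^{k}\frac{z_i^{n_i}}{n_i},\qquad z_i=1-\frac{1}{u-k+i}\quad(1\le i\le k),$$ the sum running over integers $n_1,\dots,n_k$.
   Context: The functions $P_k$ are defined by $P_0(u)=1$ for $u\ge 0$, and for integers $k\ge1$, $P_k:[k,\infty)\to\mathbb{R}$ is the function with $P_k(k)=0$ and $uP_k'(u)=P_{k-1}(u-1)$ for $u\ge k$, i.e. $P_k(u)=\int_k^u P_{k-1}(x-1)\,\frac{dx}{x}$. *)

From Stdlib Require Import Reals List.
From Coquelicot Require Import Coquelicot.
Open Scope R_scope.

Fixpoint P (k : nat) (u : R) : R :=
  match k with
  | O => 1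
  | S j => RInt (fun x => P j (x - 1) / x) (INR (S j)) u
  end.

Fixpoint sum_1_to (f : nat -> R) (N : nat) : R :=
  match N with
  | O => 0
  | S m => sum_1_to f m + f (S m)
  end.

(* Truncated multiple sum: for z = [z_1; ...; z_k],
   msum z N = sum over N >= n_1 > n_2 > ... > n_k > 0 of prod_i z_i^{n_i}/n_i
   (written as the nested sum; the empty product is 1). *)
Fixpoint msum (z : list R) (N : nat) : R :=
  match z with
  | nil => 1
  | a :: zs => sum_1_to (fun n => a ^ n / INR n * msum zs (n - 1)) N
  end.

Definition zlist (k : nat) (u : R) : list R :=
  map (fun i => 1 - 1 / (u - INR k + INR i)) (seq 1 k).

From Stdlib Require Import Reals List Lra Lia.
From Coquelicot Require Import Coquelicot.
Open Scope R_scope.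

(* Write D_j(x, N) := msum (zlist j x) N for the truncated multiple sum and
   a_c(x) := 1 - 1/(x - c), so that zlist (j+1) x = a_j(x) :: zlist j x.
   The proof mirrors, at the truncated level, the integral recursion of P:
   (1) [derivative identity] for x > j,
         d/dx D_{j+1}(x,N) = D_j(x-1,N)/x - a_j(x)^N D_j(x,N)/(x-j);
       since D_{j+1}(j+1,N) = 0, the fundamental theorem of calculus gives
         D_{j+1}(u,N) = int_{j+1}^u [D_j(x-1,N)/x - a_j(x)^N D_j(x,N)/(x-j)] dx,
       whereas P_{j+1}(u) = int_{j+1}^u P_j(x-1)/x dx.
   (2) [bounds] on [j, U] all variables z_i lie in [0, 1 - 1/U], hence
       0 <= D_j <= U^j, and a_j(x)^N <= a_j(U)^N -> 0 uniformly on [j+1, U].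
   (3) Comparing the two integrals, induction on j shows that D_j(., N)
       converges to P_j uniformly on every [j, U]; the theorem is the
       pointwise consequence at x = u. *)

Lemma sum_1_to_ext (f g : nat -> R) (N : nat) :
  (forall n, (1 <= n <= N)%nat -> f n = g n) -> sum_1_to f N = sum_1_to g N.
Proof.
  induction N as [|N IH]; intros Hfg; simpl; [reflexivity|].
  rewrite IH by (intros; apply Hfg; lia).
  rewrite Hfg by lia; reflexivity.
Qed.

Lemma sum_1_to_le (f g : nat -> R) (N : nat) :
  (forall n, (1 <= n <= N)%nat -> f n <= g n) -> sum_1_to f N <= sum_1_to g N.
Proof.
  induction N as [|N IH]; intros Hfg; simpl; [lra|].
  apply Rplus_le_compat; [apply IH; intros; apply Hfg|apply Hfg]; lia.
Qed.

Lemma sum_1_to_plus (f g : nat -> R) (N : nat) :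
  sum_1_to (fun n => f n + g n) N = sum_1_to f N + sum_1_to g N.
Proof. induction N as [|N IH]; simpl; [|rewrite IH]; ring. Qed.

Lemma sum_1_to_scal (c : R) (f : nat -> R) (N : nat) :
  sum_1_to (fun n => c * f n) N = c * sum_1_to f N.
Proof. induction N as [|N IH]; simpl; [|rewrite IH]; ring. Qed.

Lemma sum_1_to_const0 (N : nat) : sum_1_to (fun _ => 0) N = 0.
Proof. induction N as [|N IH]; simpl; [|rewrite IH]; ring. Qed.

Lemma sum_1_to_telescope (g : nat -> R) (N : nat) :
  sum_1_to (fun n => g (n - 1)%nat - g n) N = g O - g N.
Proof.
  induction N as [|N IH]; simpl; [ring|].
  rewrite IH, Nat.sub_0_r; ring.
Qed.

Lemma sum_1_to_geom (r : R) (N : nat) :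
  (1 - r) * sum_1_to (fun n => r ^ n) N = r - r ^ S N.
Proof. induction N as [|N IH]; simpl in *; [ring|]. rewrite Rmult_plus_distr_l, IH; ring. Qed.

Lemma sum_1_to_derive (F : R -> nat -> R) (dF : nat -> R) (x : R) (N : nat) :
  (forall n, (1 <= n <= N)%nat -> is_derive (fun y => F y n) x (dF n)) ->
  is_derive (fun y => sum_1_to (F y) N) x (sum_1_to dF N).
Proof.
  induction N as [|N IH]; intros HF; simpl.
  - exact (is_derive_const (K:=R_AbsRing) (V:=R_NormedModule) 0 x).
  - apply (is_derive_plus (fun y => sum_1_to (F y) N) (fun y => F y (S N)));
      [apply IH; intros n Hn|]; apply HF; lia.
Qed.

Definition zcoef (c x : R) : R := 1 - 1 / (x - c).

Lemma zlist_S (j : nat) (x : R) : zlist (S j) x = zcoef (INR j) x :: zlist j x.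
Proof.
  unfold zlist, zcoef. change (seq 1 (S j)) with (1%nat :: seq 2 j).
  rewrite map_cons, <- seq_shift, map_map, S_INR. simpl (INR 1). f_equal.
  - f_equal; f_equal; ring.
  - apply map_ext; intros i. rewrite S_INR; f_equal; f_equal; ring.
Qed.

Lemma zlist_length (j : nat) (x : R) : length (zlist j x) = j.
Proof. unfold zlist. rewrite length_map, length_seq. reflexivity. Qed.

Lemma zcoef_bounds (c x U : R) : 1 <= x - c <= U -> 0 <= zcoef c x <= 1 - 1 / U.
Proof.
  intros Hx. unfold zcoef, Rdiv. rewrite !Rmult_1_l.
  assert (/ (x - c) <= 1) by (rewrite <- Rinv_1; apply Rinv_le_contravar; lra).
  assert (/ U <= / (x - c)) by (apply Rinv_le_contravar; lra).
  lra.
Qed.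

Lemma zlist_bounds (j : nat) (x U : R) : INR j <= x <= U ->
  forall z, In z (zlist j x) -> 0 <= z <= 1 - 1 / U.
Proof.
  intros Hx z Hz. unfold zlist in Hz. apply in_map_iff in Hz.
  destruct Hz as [i [<- Hi]]. apply in_seq in Hi.
  assert (1 <= INR i <= INR j) by (split; [apply (le_INR 1)|apply le_INR]; lia).
  replace (x - INR j + INR i) with (x - (INR j - INR i)) by ring.
  apply (zcoef_bounds (INR j - INR i)); lra.
Qed.

(* Truncated multiple sums in variables from [0, 1 - 1/U] are bounded by
   U^(number of variables), uniformly in N: each level contributes at most
   sum_{n>=1} (1-1/U)^n <= U. *)
Lemma msum_bounds (U : R) (zs : list R) (N : nat) : 1 <= U ->
  (forall z, In z zs -> 0 <= z <= 1 - 1 / U) -> 0 <= msum zs N <= U ^ length zs.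
Proof.
  intros HU. revert N. induction zs as [|a zs IH]; intros N Hz; simpl; [lra|].
  set (r := 1 - 1 / U).
  assert (Ha : 0 <= a <= r) by (apply Hz; now left).
  assert (IH' : forall m, 0 <= msum zs m <= U ^ length zs)
    by (intros; apply IH; intros; apply Hz; now right).
  assert (Hterm : forall n, (1 <= n)%nat ->
    0 <= a ^ n / INR n * msum zs (n - 1) <= U ^ length zs * r ^ n).
  { intros n Hn. specialize (IH' (n - 1)%nat).
    assert (1 <= INR n) by (apply (le_INR 1); lia).
    assert (0 <= a ^ n <= r ^ n) by (split; [apply pow_le|apply pow_incr; split]; lra).
    assert (0 <= a ^ n / INR n <= a ^ n).
    { split; [apply Rdiv_le_0_compat; lra|].
      apply Rmult_le_reg_r with (INR n); [lra|].
      field_simplify; [nra|lra]. }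
    split; [apply Rmult_le_pos|rewrite Rmult_comm; apply Rmult_le_compat]; lra. }
  assert (Hgeom : sum_1_to (fun n => r ^ n) N <= U).
  { assert (Hr : 0 <= r <= 1).
    { unfold r. assert (0 < 1 / U) by (apply Rdiv_lt_0_compat; lra).
      assert (1 / U <= 1)
        by (unfold Rdiv; rewrite Rmult_1_l, <- Rinv_1; apply Rinv_le_contravar; lra).
      lra. }
    assert (0 <= r ^ S N) by (apply pow_le; lra).
    pose proof (sum_1_to_geom r N) as Hsum.
    replace (1 - r) with (/ U) in Hsum by (unfold r; field; lra).
    apply Rmult_le_reg_l with (/ U); [apply Rinv_0_lt_compat; lra|].
    rewrite Hsum, Rinv_l by lra. lra. }
  split.
  - rewrite <- (sum_1_to_const0 N). apply sum_1_to_le; intros; apply Hterm; lia.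
  - apply Rle_trans with (sum_1_to (fun n => U ^ length zs * r ^ n) N).
    + apply sum_1_to_le; intros; apply Hterm; lia.
    + rewrite sum_1_to_scal, Rmult_comm. apply Rmult_le_compat_r; [apply pow_le; lra|exact Hgeom].
Qed.

Lemma msum_zlist_bounds (j : nat) (x U : R) (N : nat) : 1 <= U -> INR j <= x <= U ->
  0 <= msum (zlist j x) N <= U ^ j.
Proof.
  intros HU Hx. rewrite <- (zlist_length j x) at 3.
  apply msum_bounds; [exact HU|exact (zlist_bounds j x U Hx)].
Qed.

Lemma msum_zlist_0 (j : nat) (x : R) : msum (zlist (S j) x) 0 = 0.
Proof. rewrite zlist_S; reflexivity. Qed.

Lemma msum_zlist_succ (j : nat) (x : R) (n : nat) :
  msum (zlist (S j) x) (S n) =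
  msum (zlist (S j) x) n + zcoef (INR j) x ^ S n / INR (S n) * msum (zlist j x) n.
Proof. rewrite zlist_S. simpl msum. rewrite Nat.sub_0_r. reflexivity. Qed.

(* D_{j+1} vanishes at x = j+1, where its first variable a_j(j+1) is 0. *)
Lemma msum_zlist_start (j : nat) (N : nat) : msum (zlist (S j) (INR (S j))) N = 0.
Proof.
  rewrite zlist_S; cbn [msum]. rewrite <- (sum_1_to_const0 N).
  apply sum_1_to_ext; intros n Hn; cbv beta.
  replace (zcoef (INR j) (INR (S j))) with 0 by (unfold zcoef; rewrite S_INR, Rplus_minus_l; field).
  rewrite pow_i by lia. unfold Rdiv. ring.
Qed.

Lemma is_derive_eq_value (f : R -> R) (x l l' : R) :
  l = l' -> is_derive f x l -> is_derive f x l'.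
Proof. intros <- H; exact H. Qed.

(* Shifting x by 1 shifts the index: a_i(x-1) = a_{i+1}(x); thus zlist (j+1) (x-1)
   has first variable a_{j+1}(x) and tail zlist j (x-1). *)
Lemma zcoef_shift (i : nat) (x : R) : zcoef (INR i) (x - 1) = zcoef (INR (S i)) x.
Proof. unfold zcoef. rewrite S_INR. f_equal. f_equal. ring. Qed.

(* d/dx a_c(x)^n/n = (a_c(x)^{n-1} - a_c(x)^n)/(x - c), since a_c' = (1 - a_c)/(x - c);
   this form telescopes when summed over n. *)
Lemma zcoef_pow_derive (c x : R) (n : nat) : x - c <> 0 -> (1 <= n)%nat ->
  is_derive (fun y => zcoef c y ^ n / INR n) x
    ((zcoef c x ^ (n - 1) - zcoef c x ^ n) / (x - c)).
Proof.
  intros Hx Hn. destruct n as [|m]; [lia|].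
  assert (INR (S m) <> 0) by (apply not_0_INR; lia).
  unfold zcoef. auto_derive; [lra|].
  change (match m with 0%nat => 1 | S _ => INR m + 1 end) with (INR (S m)).
  rewrite Nat.sub_succ, Nat.sub_0_r, <- tech_pow_Rmult.
  replace (1 + - (1 * / (x + - c))) with (1 - 1 / (x - c)) by (field; lra).
  set (w := (1 - 1 / (x - c)) ^ m). field. lra.
Qed.

(* The derivative of D_{j+1}(., N), see msum_zlist_derive. *)
Definition dtrunc (j N : nat) (x : R) : R :=
  msum (zlist j (x - 1)) N / x
  - zcoef (INR j) x ^ N * msum (zlist j x) N / (x - INR j).

Lemma msum_zlist_derive_base (N : nat) (x : R) : 0 < x ->
  is_derive (fun y => msum (zlist 1 y) N) x (dtrunc 0 N x).
Proof.
  intros Hx. set (a := zcoef 0 x).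
  apply is_derive_ext with (fun y => sum_1_to (fun n => zcoef 0 y ^ n / INR n) N).
  { intros y. rewrite zlist_S. cbn [msum zlist seq map INR].
    apply sum_1_to_ext; intros n _. ring. }
  apply is_derive_eq_value with (sum_1_to (fun n => (a ^ (n - 1) - a ^ n) / (x - 0)) N).
  - rewrite (sum_1_to_ext _ (fun n => / (x - 0) * (a ^ (n - 1)%nat - a ^ n)))
      by (intros; unfold Rdiv; ring).
    rewrite sum_1_to_scal, (sum_1_to_telescope (pow a)).
    unfold dtrunc. cbn [msum zlist seq map INR pow]. fold a. field. lra.
  - apply sum_1_to_derive; intros n Hn. apply zcoef_pow_derive; [lra|lia].
Qed.

(* Differentiating
   D_{i+2}(x,N) = sum_n a^n/n D_{i+1}(x,n-1), a = a_{i+1}(x), termwise and using the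
   identity for D_{i+1}, the n-th term becomes
     a^n/n D_i(x-1,n-1)/x + (a^{n-1} D_{i+1}(x,n-1) - a^n D_{i+1}(x,n))/(x-i-1),
   because a_i(x) (x - i) = x - i - 1; the first parts sum to D_{i+1}(x-1,N)/x and
   the second parts telescope. *)
Lemma msum_zlist_derive_step (i : nat) :
  (forall N x, INR i < x ->
     is_derive (fun y => msum (zlist (S i) y) N) x (dtrunc i N x)) ->
  forall N x, INR (S i) < x ->
     is_derive (fun y => msum (zlist (S (S i)) y) N) x (dtrunc (S i) N x).
Proof.
  intros IH N x Hx. rewrite S_INR in Hx. assert (0 <= INR i) by apply pos_INR.
  set (a := zcoef (INR (S i)) x).
  set (D := fun m => msum (zlist (S i) x) m).
  set (B := fun m => msum (zlist i (x - 1)) m).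
  apply is_derive_ext with
    (fun y => sum_1_to (fun n => zcoef (INR (S i)) y ^ n / INR n * msum (zlist (S i) y) (n - 1)) N).
  { intros y. rewrite (zlist_S (S i)). reflexivity. }
  apply is_derive_eq_value with
    (sum_1_to (fun n => a ^ n / INR n * B (n - 1)%nat * / x
                        + / (x - INR (S i)) * (a ^ (n - 1) * D (n - 1)%nat - a ^ n * D n)) N).
  - rewrite sum_1_to_plus, sum_1_to_scal, (sum_1_to_telescope (fun n => a ^ n * D n)).
    assert (HD0 : D O = 0) by apply msum_zlist_0.
    assert (HB : sum_1_to (fun n => a ^ n / INR n * B (n - 1)%nat * / x) N
                 = msum (zlist (S i) (x - 1)) N / x).
    { rewrite zlist_S, zcoef_shift. cbn [msum]. unfold Rdiv at 2.
      rewrite Rmult_comm, <- sum_1_to_scal. apply sum_1_to_ext; intros; unfold B; fold a; ring. }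
    rewrite HB, HD0. unfold dtrunc, D. fold a. rewrite S_INR. field. lra.
  - apply sum_1_to_derive; intros n Hn.
    pose proof (is_derive_mult _ _ x _ _
      (zcoef_pow_derive (INR (S i)) x n ltac:(rewrite S_INR; lra) ltac:(lia))
      (IH (n - 1)%nat x ltac:(lra)) Rmult_comm) as Hprod.
    revert Hprod. apply is_derive_eq_value.
    unfold mult, plus; cbn -[msum zlist zcoef INR pow dtrunc]. fold a.
    destruct n as [|m]; [lia|]. rewrite Nat.sub_succ, Nat.sub_0_r.
    unfold D at 2. rewrite msum_zlist_succ.
    unfold dtrunc, B, D. rewrite <- (tech_pow_Rmult (zcoef (INR i) x)).
    set (am := a ^ m). set (am1 := a ^ S m). set (bm := zcoef (INR i) x ^ m).
    assert (INR (S m) <> 0) by (apply not_0_INR; lia).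
    unfold zcoef. rewrite S_INR. field. repeat split; lra.
Qed.

Lemma msum_zlist_derive (j N : nat) (x : R) : INR j < x ->
  is_derive (fun y => msum (zlist (S j) y) N) x (dtrunc j N x).
Proof.
  revert N x. induction j as [|i IH]; intros N x Hx.
  - apply msum_zlist_derive_base. exact Hx.
  - exact (msum_zlist_derive_step i IH N x Hx).
Qed.

Lemma msum_zlist_differentiable (j N : nat) (y : R) : INR j - 1 < y ->
  ex_derive (fun x => msum (zlist j x) N) y.
Proof.
  destruct j as [|i]; intros Hy.
  - exact (ex_derive_const (K:=R_AbsRing) (V:=R_NormedModule) 1 y).
  - eexists. apply msum_zlist_derive. rewrite S_INR in Hy. lra.
Qed.

Lemma dtrunc_continuous (j N : nat) (x : R) : INR j < x -> continuous (dtrunc j N) x.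
Proof.
  intros Hx. assert (0 <= INR j) by apply pos_INR.
  apply (ex_derive_continuous (K:=R_AbsRing) (V:=R_NormedModule)).
  pose (F := fun y => msum (zlist j y) N).
  assert (HF : forall y, INR j - 1 < y -> ex_derive F y) by apply msum_zlist_differentiable.
  change (ex_derive (fun y => F (y - 1) / y - zcoef (INR j) y ^ N * F y / (y - INR j)) x).
  clearbody F. unfold zcoef. auto_derive; repeat split; try apply HF; lra.
Qed.

Lemma msum_zlist_integral (j N : nat) (u : R) : INR (S j) <= u ->
  msum (zlist (S j) u) N = RInt (dtrunc j N) (INR (S j)) u.
Proof.
  intros Hu. rewrite S_INR in Hu. symmetry. apply is_RInt_unique.
  replace (msum (zlist (S j) u) N)
    with (minus (msum (zlist (S j) u) N) (msum (zlist (S j) (INR (S j))) N))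
    by (rewrite msum_zlist_start; unfold minus, plus, opp; simpl; ring).
  apply (is_RInt_derive (fun x => msum (zlist (S j) x) N));
    intros x Hx; rewrite Rmin_left, Rmax_right, S_INR in Hx by (rewrite S_INR; lra).
  - apply msum_zlist_derive. lra.
  - apply dtrunc_continuous. lra.
Qed.

Lemma RInt_derive_on_ray (g : R -> R) (l a y : R) :
  (forall t, l < t -> continuous g t) -> l < a -> l < y ->
  is_derive (fun b => RInt g a b) y (g y).
Proof.
  intros Hg Ha Hy. apply (is_derive_RInt g _ a); [|apply Hg; lra].
  apply (locally_interval _ y l p_infty); [simpl; lra|exact I|].
  intros t Ht _. simpl in Ht.
  apply (RInt_correct (V:=R_CompleteNormedModule)).
  apply (ex_RInt_continuous (V:=R_CompleteNormedModule)). intros z Hz.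
  assert (l < Rmin a t) by (apply Rmin_glb_lt; lra).
  apply Hg. lra.
Qed.

Lemma shifted_quotient_continuous (f : R -> R) (x : R) :
  ex_derive f (x - 1) -> x <> 0 -> continuous (fun t => f (t - 1) / t) x.
Proof.
  intros Hf Hx. apply (ex_derive_continuous (K:=R_AbsRing) (V:=R_NormedModule)).
  auto_derive. repeat split; assumption.
Qed.

Lemma P_differentiable (m : nat) (y : R) : INR m - 1 < y -> ex_derive (P m) y.
Proof.
  revert y. induction m as [|m IH]; intros y Hy.
  - apply ex_derive_const.
  - assert (0 <= INR m) by apply pos_INR. rewrite S_INR in Hy.
    exists (P m (y - 1) / y).
    change (is_derive (fun b => RInt (fun x => P m (x - 1) / x) (INR (S m)) b) y
              ((fun x => P m (x - 1) / x) y)).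
    apply (RInt_derive_on_ray _ (INR m)); [|rewrite S_INR; lra|lra].
    intros t Ht. apply shifted_quotient_continuous; [apply IH|]; lra.
Qed.

Lemma P_integrand_continuous (m : nat) (t : R) : INR m < t ->
  continuous (fun s => P m (s - 1) / s) t.
Proof.
  intros Ht. assert (0 <= INR m) by apply pos_INR.
  apply shifted_quotient_continuous; [apply P_differentiable|]; lra.
Qed.

Lemma error_as_integral (j N : nat) (u : R) : INR (S j) <= u ->
  msum (zlist (S j) u) N - P (S j) u
  = RInt (fun t => dtrunc j N t - P j (t - 1) / t) (INR (S j)) u.
Proof.
  intros Hu. rewrite msum_zlist_integral by exact Hu.
  assert (Hcont : forall f : R -> R, (forall t, INR j < t -> continuous f t) ->
                  ex_RInt f (INR (S j)) u).
  { intros f Hf. apply (ex_RInt_continuous (V:=R_CompleteNormedModule)).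
    intros t Ht. rewrite Rmin_left in Ht by exact Hu.
    apply Hf. rewrite S_INR in Ht. lra. }
  symmetry. exact (RInt_minus _ _ _ _
    (Hcont _ (dtrunc_continuous j N)) (Hcont _ (P_integrand_continuous j))).
Qed.

Lemma error_integrand_bound (j N : nat) (U t : R) : INR (S j) <= t <= U ->
  Rabs (dtrunc j N t - P j (t - 1) / t)
  <= Rabs (msum (zlist j (t - 1)) N - P j (t - 1)) + zcoef (INR j) U ^ N * U ^ j.
Proof.
  intros Ht. rewrite S_INR in Ht. assert (0 <= INR j) by apply pos_INR.
  set (X := msum (zlist j (t - 1)) N - P j (t - 1)).
  set (a := zcoef (INR j) t). set (C := msum (zlist j t) N).
  assert (Ha : 0 <= a <= zcoef (INR j) U).
  { replace (zcoef (INR j) U) with (1 - 1 / (U - INR j)) by reflexivity.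
    apply zcoef_bounds. lra. }
  assert (HaN : 0 <= a ^ N <= zcoef (INR j) U ^ N)
    by (split; [apply pow_le|apply pow_incr; split]; lra).
  assert (HC : 0 <= C <= U ^ j) by (apply msum_zlist_bounds; lra).
  assert (Hinv : forall s, 1 <= s -> 0 < / s <= 1)
    by (intros s Hs; split; [apply Rinv_0_lt_compat|rewrite <- Rinv_1; apply Rinv_le_contravar]; lra).
  replace (dtrunc j N t - P j (t - 1) / t) with (X * / t - a ^ N * C * / (t - INR j))
    by (unfold dtrunc, X; fold a C; field; lra).
  unfold Rminus at 1. eapply Rle_trans; [apply Rabs_triang|]. rewrite Rabs_Ropp.
  apply Rplus_le_compat.
  - destruct (Hinv t ltac:(lra)). rewrite Rabs_mult, (Rabs_pos_eq (/ t)) by lra.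
    pose proof (Rabs_pos X). nra.
  - destruct (Hinv (t - INR j) ltac:(lra)).
    rewrite Rabs_pos_eq by (apply Rmult_le_pos; [apply Rmult_le_pos|]; lra).
    assert (a ^ N * C <= zcoef (INR j) U ^ N * U ^ j) by (apply Rmult_le_compat; lra).
    assert (0 <= a ^ N * C) by (apply Rmult_le_pos; lra).
    nra.
Qed.

Definition converges_uniformly_on (f : nat -> R -> R) (g : R -> R) (a b : R) : Prop :=
  forall eps, 0 < eps -> exists N0, forall N, (N0 <= N)%nat ->
    forall x, a <= x <= b -> Rabs (f N x - g x) <= eps.

(* Uniform convergence propagates from level j on [j, U] to level j+1 on [j+1, U]:
   the error integrand is eventually below eps/(2U) + eps/(2U) on an interval of
   length at most U. *)
Lemma uniform_convergence_step (j : nat) (U : R) :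
  converges_uniformly_on (fun N x => msum (zlist j x) N) (P j) (INR j) U ->
  converges_uniformly_on (fun N x => msum (zlist (S j) x) N) (P (S j)) (INR (S j)) U.
Proof.
  intros IH eps Heps.
  destruct (Rlt_dec U (INR (S j))) as [Hempty|HU].
  { exists O. intros N _ x Hx. lra. }
  assert (HSj := S_INR j). assert (0 <= INR j) by apply pos_INR.
  set (r := zcoef (INR j) U).
  assert (Hr : 0 <= r <= 1 - 1 / (U - INR j)) by (apply zcoef_bounds; lra).
  assert (Hr1 : r < 1) by (assert (0 < 1 / (U - INR j)) by (apply Rdiv_lt_0_compat; lra); lra).
  assert (HUj : 0 < U ^ j) by (apply pow_lt; lra).
  destruct (IH (eps / (2 * U)) ltac:(apply Rdiv_lt_0_compat; lra)) as [N1 HN1].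
  destruct (pow_lt_1_zero r ltac:(rewrite Rabs_pos_eq; lra) (eps / (2 * U * U ^ j))
              ltac:(apply Rdiv_lt_0_compat; [lra|apply Rmult_lt_0_compat; lra]))
    as [N2 HN2].
  exists (Nat.max N1 N2). intros N HN x Hx. cbv beta.
  rewrite error_as_integral by lra.
  apply Rle_trans with ((x - INR (S j)) * (eps / (2 * U) + eps / (2 * U * U ^ j) * U ^ j)).
  - apply abs_RInt_le_const; [lra| |].
    + apply (ex_RInt_minus (V:=R_CompleteNormedModule));
        apply (ex_RInt_continuous (V:=R_CompleteNormedModule)); intros t Ht;
        rewrite Rmin_left in Ht by lra;
        [apply dtrunc_continuous|apply P_integrand_continuous]; lra.
    + intros t Ht. eapply Rle_trans; [apply (error_integrand_bound j N U t); lra|].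
      apply Rplus_le_compat; [apply HN1; [lia|lra]|].
      apply Rmult_le_compat_r; [lra|].
      specialize (HN2 N ltac:(lia)). rewrite Rabs_pos_eq in HN2 by (apply pow_le; lra).
      fold r. lra.
  - assert (0 <= eps / (2 * U)) by (apply Rdiv_le_0_compat; lra).
    assert (0 <= eps / (2 * U * U ^ j) * U ^ j)
      by (apply Rmult_le_pos; [apply Rdiv_le_0_compat; [|apply Rmult_lt_0_compat]|]; lra).
    apply Rle_trans with (U * (eps / (2 * U) + eps / (2 * U * U ^ j) * U ^ j));
      [apply Rmult_le_compat_r; lra|].
    right. field. lra.
Qed.

Lemma uniform_convergence (j : nat) (U : R) :
  converges_uniformly_on (fun N x => msum (zlist j x) N) (P j) (INR j) U.
Proof.
  induction j as [|j IH].
  - intros eps Heps. exists O. intros N _ x _. cbn. rewrite Rminus_diag, Rabs_R0. lra.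
  - apply uniform_convergence_step, IH.
Qed.

Theorem theorem3 (k : nat) (u : R) :
  (1 <= k)%nat -> INR k <= u ->
  is_lim_seq (fun N : nat => msum (zlist k u) N) (P k u).
Proof.
  intros _ Hu. apply is_lim_seq_spec. intros eps.
  destruct (uniform_convergence k u (eps / 2) ltac:(destruct eps; simpl; lra)) as [N0 HN0].
  exists N0. intros N HN. specialize (HN0 N HN u ltac:(lra)).
  destruct eps as [eps Heps]; simpl in *. lra.
Qed.
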